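(* Let $G$ be a graph and $S\subseteq V(G)$. For any nonempty set $C \subseteq V(G)$ such that $G[C]$ is connected, the following conditions are equivalent: (i) $N(C)$ is an important $C-S$ separator; (ii) for every $v \in C$, $N(C)$ is an important $\{v\}-S$ separator; (iii) there exists $v \in C$ such that $N(C)$ is an important $\{v\}-S$ separator.
   Context: $N(C)$ is the set of vertices outside $C$ with a neighbour in $C$. For $X,Y\subseteq V(G)$, a set $W\subseteq V(G)$ is an $X-Y$ separator if no connected component of $G\setminus W$ contains both a vertex of $X$ and a vertex of $Y$. For a graph $H$ and $Z\subseteq V(H)$, $R_H(Z)$ is the set of vertices reachable from $Z$ in $H$. An inclusion-wise minimal $X-Y$ separator $W$ is an important $X-Y$ separator if there is no $X-Y$ separator $W'$ with $|W'|\le|W|$ and $R_{G\setminus W}(X\setminus W)\subsetneq R_{G\setminus W'}(X\setminus W')$. *)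

From mathcomp Require Import all_boot.
Set Implicit Arguments. Unset Strict Implicit. Unset Printing Implicit Defensive.

Section Graphs.
Variables (T : finType) (e : rel T).

Definition simple_graph : Prop := symmetric e /\ irreflexive e.

Definition induced (A : {set T}) : rel T :=
  [rel x y | [&& e x y, x \in A & y \in A]].

Definition del (W : {set T}) : rel T := induced (~: W).

Definition nbh (C : {set T}) : {set T} :=
  [set v | (v \notin C) && [exists u in C, e u v]].

(* G[C] is connected (C nonempty is assumed separately). *)
Definition connected_in (C : {set T}) : Prop :=
  forall u v, u \in C -> v \in C -> connect (induced C) u v.

Definition reach (W Z : {set T}) : {set T} :=
  [set v | (v \notin W) && [exists z in Z :\: W, connect (del W) z v]].

Definition separator (X Y W : {set T}) : Prop :=
  forall x y, x \in X :\: W -> y \in Y :\: W -> ~~ connect (del W) x y.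

Definition min_separator (X Y W : {set T}) : Prop :=
  separator X Y W /\ forall W' : {set T}, W' \proper W -> ~ separator X Y W'.

Definition important_separator (X Y W : {set T}) : Prop :=
  min_separator X Y W /\
  ~ exists W' : {set T}, [/\ separator X Y W', #|W'| <= #|W| &
                   reach W X \proper reach W' X].

End Graphs.

From mathcomp Require Import all_boot.

(* N(C) avoids C, and for any W avoiding C every vertex of C reaches
   every other one inside G[C] \subseteq G \ W.  Hence, for such W, being a
   C-S separator, being a {v}-S separator and the reachable sets R(C), R({v})
   all coincide.  A W' whose reachable set strictly contains R(C) = R({v})
   contains C in its reachable set, so W' avoids C as well, and the two
   notions of importance coincide. *)

Set Implicit Arguments.
Unset Strict Implicit.
Unset Printing Implicit Defensive.

Section Reach.
Variables (T : finType) (e : rel T).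

Lemma disjoint_nbh (C : {set T}) : [disjoint C & nbh e C].
Proof. by rewrite -setI_eq0; apply/eqP/setP => x; rewrite !inE; case: (x \in C). Qed.

Lemma disjoint_reach (W X : {set T}) : [disjoint reach e W X & W].
Proof.
rewrite -setI_eq0; apply/eqP/setP => x; rewrite !inE.
by case: (x \in W); rewrite ?andbF.
Qed.

Lemma sub_reach (W X : {set T}) : [disjoint X & W] -> X \subset reach e W X.
Proof.
move=> dXW; apply/subsetP => x xX; have xW := disjointFr dXW xX.
by rewrite inE xW; apply/existsP; exists x; rewrite !inE xW xX connect0.
Qed.

End Reach.

Section ConnectedSet.
Variables (T : finType) (e : rel T) (C : {set T}) (v : T).
Hypotheses (connC : connected_in e C) (vC : v \in C).

Lemma connect_del_connected (W : {set T}) x :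
  [disjoint C & W] -> x \in C -> connect (del e W) v x.
Proof.
move=> dCW xC; apply: connect_sub (connC vC xC) => a b /and3P[eab aC bC].
apply: connect1; rewrite /del /induced /= eab !inE.
by rewrite (disjointFr dCW aC) (disjointFr dCW bC).
Qed.

Lemma reach_connected (W : {set T}) :
  [disjoint C & W] -> reach e W C = reach e W [set v].
Proof.
move=> dCW; have vW := disjointFr dCW vC.
apply/setP => y; rewrite !inE; case: (y \in W) => //=.
apply/existsP/existsP => -[z]; rewrite !inE => /andP[/andP[_ zX] zy].
- exists v; rewrite !inE vW eqxx.
  exact: connect_trans (connect_del_connected dCW zX) zy.
- by exists v; rewrite !inE vW vC -(eqP zX).
Qed.

Lemma separator_connected (S W : {set T}) :
  [disjoint C & W] -> separator e C S W <-> separator e [set v] S W.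
Proof.
move=> dCW; have vW := disjointFr dCW vC.
have vvW : v \in [set v] :\: W by rewrite !inE vW eqxx.
split=> sepW x y + yS.
- rewrite !inE => /andP[_ /eqP->]; apply: sepW yS.
  by rewrite !inE vW vC.
- rewrite inE => /andP[_ xC]; apply: contraNN (sepW v y vvW yS) => xy.
  exact: connect_trans (connect_del_connected dCW xC) xy.
Qed.

Lemma min_separator_connected (S W : {set T}) :
  [disjoint C & W] -> min_separator e C S W <-> min_separator e [set v] S W.
Proof.
move=> dCW.
have dCW' (W' : {set T}) : W' \proper W -> [disjoint C & W'].
  by move=> ltW; apply: disjointWr (proper_sub ltW) dCW.
split=> -[sepW minW]; split.
- exact/(separator_connected S dCW).
- by move=> W' ltW' /(separator_connected S (dCW' _ ltW')); apply: minW.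
- exact/(separator_connected S dCW).
- by move=> W' ltW' /(separator_connected S (dCW' _ ltW')); apply: minW.
Qed.

Lemma proper_reach_connected (W W' : {set T}) :
  [disjoint C & W] ->
  reach e W C \proper reach e W' C <-> reach e W [set v] \proper reach e W' [set v].
Proof.
move=> dCW; rewrite -reach_connected //.
have CW : C \subset reach e W C by apply: sub_reach.
have dCW' (X : {set T}) : reach e W C \proper reach e W' X -> [disjoint C & W'].
  move=> /proper_sub ltW; apply: disjointWl (disjoint_reach e W' X).
  exact: subset_trans CW ltW.
split=> ltW; have dC := dCW' _ ltW.
- by rewrite -(reach_connected dC).
- by rewrite (reach_connected dC).
Qed.

Lemma important_separator_connected (S W : {set T}) :
  [disjoint C & W] ->
  important_separator e C S W <-> important_separator e [set v] S W.
Proof.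
move=> dCW; have minE := min_separator_connected S dCW.
have larger (W' : {set T}) : reach e W C \proper reach e W' C ->
    separator e C S W' <-> separator e [set v] S W'.
  move=> /proper_sub /(subset_trans (sub_reach e dCW)) CW'.
  exact/separator_connected/(disjointWl CW')/disjoint_reach.
split=> -[minW noW]; split=> [|[W' [sepW' cardW' ltW']]]; first exact/minE.
- have ltW'C := (proper_reach_connected W' dCW).2 ltW'.
  by apply: noW; exists W'; split=> //; apply/(larger _ ltW'C).
- exact/minE.
- have ltW'v := (proper_reach_connected W' dCW).1 ltW'.
  by apply: noW; exists W'; split=> //; apply/(larger _ ltW').
Qed.

End ConnectedSet.

Theorem lemma3p3 (T : finType) (e : rel T) (S C : {set T}) :
  simple_graph e -> C != set0 -> connected_in e C ->
  (important_separator e C S (nbh e C) <->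
     (forall v, v \in C -> important_separator e [set v] S (nbh e C)))
  /\
  ((forall v, v \in C -> important_separator e [set v] S (nbh e C)) <->
     (exists2 v, v \in C & important_separator e [set v] S (nbh e C))).
Proof.
move=> _ /set0Pn[v0 v0C] connC.
have imp_v v : v \in C -> important_separator e C S (nbh e C) <->
    important_separator e [set v] S (nbh e C).
  by move=> vC; apply: important_separator_connected; rewrite ?disjoint_nbh.
split; split.
- by move=> impC v vC; apply/(imp_v v vC).
- by move=> impv; apply/(imp_v v0 v0C)/impv.
- by move=> impv; exists v0 => //; apply: impv.
- by move=> [v vC impv] w wC; apply/(imp_v w wC)/(imp_v v vC).
Qed.
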